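(* Let $(\mathbb{H}_n)_{n\geq 2}$ be a family of $3$-uniform hypergraphs $\mathbb{H}_n=\langle V_n,E_n\rangle$ without isolated vertices such that each $\mathbb{H}_n$ is not $2$-colourable and has girth greater than $3\binom{3n}{2}$. Let $\mathcal{V}$ be an ai-semiring variety that contains $S_c(abc)$. For each $n\geq 2$ let $\mathbf{w}_n$ be a non-hyperedge term for $\mathbb{H}_n$. If $\mathcal{V}$ satisfies the identity $$\mathbf{t}_{\mathbb{H}_n}\approx \mathbf{t}_{\mathbb{H}_n}+\mathbf{w}_n$$ for every $n\geq 2$, then $\mathcal{V}$ is nonfinitely based (has no finite basis for its identities).
   Context: An ai-semiring (additively idempotent semiring) is an algebra $(S,+,\cdot)$ with $(S,+)$ a commutative idempotent semigroup, $(S,\cdot)$ a semigroup, and $(x+y)z\approx xz+yz$, $x(y+z)\approx xy+xz$. Ai-semiring terms over a countable variable set $X$ are finite sums of nonempty words in $X^+$; an identity $\mathbf{u}\approx\mathbf{v}$ is a pair of terms. A variety is finitely based if it can be defined by finitely many identities. A flat semiring is an ai-semiring whose multiplicative reduct has a zero element $\infty$ and in which $x+y=\infty$ for all distinct $x,y$. $S_c(abc)$ is the flat semiring whose elements are $\infty$ together with the nonempty subwords of $abc$ in the free commutative semigroup on $\{a,b,c\}$ (i.e. $a,b,c,ab,ac,bc,abc$); the product of two such words $\mathbf u,\mathbf v$ is $\mathbf u\mathbf v$ if $\mathbf u\mathbf v$ is again such a subword, and $\infty$ otherwise; $\infty$ is a multiplicative zero; addition is $x+x=x$, $x+y=\infty$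 for $x\neq y$. A $3$-uniform hypergraph $\mathbb{H}=\langle V,E\rangle$ has a vertex set $V$ and a family $E$ of $3$-element subsets of $V$ (hyperedges). It is $2$-colourable if there is $\varphi:V\to\{0,1\}$ with $|\varphi(e)|=2$ for every $e\in E$. A cycle is a sequence $v_1,e_1,v_2,e_2,\dots,v_n,e_n$ of vertices and hyperedges without repetitions, with $v_1\in e_1\cap e_n$ and $v_{i+1}\in e_i\cap e_{i+1}$ for $1\le i<n$; its length is $n$, and the girth is the length of a shortest cycle. For a $3$-uniform hypergraph $\mathbb{H}=\langle V,E\rangle$ without isolated vertices and of girth at least $5$, the hypergraph semiring $S_{\mathbb{H}}$ is the flat semiring with pairwise distinct elements $\infty$, $\mathbf a$, $\mathbf a_v$ ($v\in V$), $\mathbf c_v$ ($v\in V$), with flat addition, $\infty$ a multiplicative zero, and commutative multiplication given by: $\mathbf a_u\mathbf a_v=\mathbf c_w$ if $\{u,v,w\}\in E$; $\mathbf a_v\mathbf c_v=\mathbf c_v\mathbf a_v=\mathbf a$; all other products equal $\infty$. (Equivalently, it is the flat semiring generated by $\{\mathbf a_v\}$ and $\infty$ subject to: commutativity; $\mathbf a_u\mathbf a_v=\infty$ unless $\{u,v\}$ lies in a hyperedge; $\mathbf a_{u_1}\mathbf a_{u_2}\mathbf a_{u_3}=\mathbf a_{v_1}\mathbf a_{v_2}\mathbf a_{v_3}=:\mathbf a$ for hyperedges $\{u_i\},\{v_i\}$; $\mathbf a_{u_1}\mathbf a_{u_2}=\mathbf a_{v_1}\mathbf a_{v_2}$ whenever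 $\{u_1,u_2,w\},\{v_1,v_2,w\}\in E$.) For such $\mathbb H$ take variables $\{x_v\mid v\in V\}$. A hyperedge product is a word $x_{v_1}x_{v_2}x_{v_3}$ with $\{v_1,v_2,v_3\}\in E$ (any order). $\mathbf{t}_{\mathbb H}$ denotes the sum of all hyperedge products. A non-hyperedge term for $\mathbb H$ is any ai-semiring term $\mathbf w$ in the variables $\{x_v\}$ whose value in $S_{\mathbb H}$ under the assignment $x_v\mapsto \mathbf a_v$ is not $\mathbf a$. *)

From Stdlib Require List.
From mathcomp Require Import all_boot.
Set Implicit Arguments. Unset Strict Implicit. Unset Printing Implicit Defensive.

(* Ai-semiring terms over a variable type X (absolutely free term algebra in
   +, * ; modulo the ai-semiring axioms every such term equals a finite sum of
   nonempty words, so identities between these terms are exactly the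
   ai-semiring identities). *)
Inductive term (X : Type) : Type :=
| Var of X
| Add of term X & term X
| Mul of term X & term X.
Arguments Var {X}. Arguments Add {X}. Arguments Mul {X}.

Fixpoint eval (X A : Type) (add mul : A -> A -> A) (s : X -> A) (t : term X) : A :=
  match t with
  | Var x => s x
  | Add t1 t2 => add (eval add mul s t1) (eval add mul s t2)
  | Mul t1 t2 => mul (eval add mul s t1) (eval add mul s t2)
  end.

Definition alg_sat (X A : Type) (add mul : A -> A -> A) (u v : term X) : Prop :=
  forall s : X -> A, eval add mul s u = eval add mul s v.

Record aisemiring := AiSemiring {
  car :> Type;
  sadd : car -> car -> car;
  smul : car -> car -> car;
  saddA : forall x y z, sadd x (sadd y z) = sadd (sadd x y) z;
  saddC : forall x y, sadd x y = sadd y x;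
  saddI : forall x, sadd x x = x;
  smulA : forall x y z, smul x (smul y z) = smul (smul x y) z;
  smulDl : forall x y z, smul (sadd x y) z = sadd (smul x z) (smul y z);
  smulDr : forall x y z, smul x (sadd y z) = sadd (smul x y) (smul x z)
}.

Definition sat (X : Type) (S : aisemiring) (u v : term X) : Prop :=
  alg_sat (@sadd S) (@smul S) u v.

(* A variety of ai-semirings is given by a set Sigma of identities
   (over the countable variable set nat): its members are the ai-semirings
   satisfying all of Sigma.  By Birkhoff every variety arises this way. *)
Definition identities := term nat -> term nat -> Prop.

Definition models (S : aisemiring) (Sigma : identities) : Prop :=
  forall u v, Sigma u v -> sat S u v.

Definition variety_sat (X : Type) (Sigma : identities) (u v : term X) : Prop :=
  forall S : aisemiring, models S Sigma -> sat S u v.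

Definition finitely_based (Sigma : identities) : Prop :=
  exists F : seq (term nat * term nat),
    forall S : aisemiring,
      models S Sigma <-> (forall p, List.In p F -> sat S p.1 p.2).

(* Elements are bit-triples (a?, b?, c?): the nonempty subwords of abc
   correspond to the 7 nonzero triples, and (false,false,false) is infinity. *)
Definition Sc := (bool * bool * bool)%type.
Definition Sc_inf : Sc := (false, false, false).
Definition Sc_mul (x y : Sc) : Sc :=
  let: (a1, b1, c1) := x in let: (a2, b2, c2) := y in
  if (x != Sc_inf) && (y != Sc_inf) && ~~ (a1 && a2) && ~~ (b1 && b2) && ~~ (c1 && c2)
  then (a1 || a2, b1 || b2, c1 || c2) else Sc_inf.
Definition Sc_add (x y : Sc) : Sc := if x == y then x else Sc_inf.

Definition contains_Sc (Sigma : identities) : Prop :=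
  forall u v, Sigma u v -> alg_sat Sc_add Sc_mul u v.

Record hypergraph := Hypergraph {
  hvert : finType;
  hedges : {set {set hvert}}
}.

Definition uniform3 (H : hypergraph) : Prop :=
  forall e, e \in hedges H -> #|e| = 3.

Definition no_isolated (H : hypergraph) : Prop :=
  forall v : hvert H, exists2 e, e \in hedges H & v \in e.

Definition two_colourable (H : hypergraph) : Prop :=
  exists phi : hvert H -> bool,
    forall e, e \in hedges H -> exists u, exists v, [/\ u \in e, v \in e & phi u != phi v].

(* a cycle v_1,e_1,...,v_k,e_k (0-indexed here) of length k >= 2 *)
Definition has_cycle (H : hypergraph) (k : nat) : Prop :=
  2 <= k /\
  exists (vs : nat -> hvert H) (es : nat -> {set hvert H}),
    [/\ {in gtn k &, injective vs}, {in gtn k &, injective es},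
        (forall i, i < k -> es i \in hedges H),
        (forall i, i < k -> vs i \in es i)
      & vs 0 \in es k.-1 /\ (forall i, i.+1 < k -> vs i.+1 \in es i)].

Definition girth_gt (H : hypergraph) (g : nat) : Prop :=
  forall k, k <= g -> ~ has_cycle H k.

Inductive sh_elt (V : Type) : Type :=
| SInf | SA | SAv of V | SCv of V.
Arguments SInf {V}. Arguments SA {V}.

Definition sh_eqb (V : eqType) (x y : sh_elt V) : bool :=
  match x, y with
  | SInf, SInf => true
  | SA, SA => true
  | SAv u, SAv v => u == v
  | SCv u, SCv v => u == v
  | _, _ => false
  end.

Definition sh_add (H : hypergraph) (x y : sh_elt (hvert H)) : sh_elt (hvert H) :=
  if sh_eqb x y then x else SInf.

Definition sh_mul (H : hypergraph) (x y : sh_elt (hvert H)) : sh_elt (hvert H) :=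
  match x, y with
  | SAv u, SAv v =>
      if [pick w | [set u; v; w] \in hedges H] is Some w then SCv w else SInf
  | SAv v, SCv w => if v == w then SA else SInf
  | SCv w, SAv v => if v == w then SA else SInf
  | _, _ => SInf
  end.

(* w is a non-hyperedge term: its value in S_H under x_v |-> a_v is not a *)
Definition non_hyperedge_term (H : hypergraph) (w : term (hvert H)) : Prop :=
  eval (@sh_add H) (@sh_mul H) (fun v => SAv v) w <> SA.

Definition term_sum (X : Type) (l : seq (term X)) : option (term X) :=
  match l with
  | [::] => None
  | t :: l' => Some (foldl Add t l')
  end.

(* sum of all hyperedge products x_u x_v x_w, {u,v,w} in E, in every order *)
Definition tH (H : hypergraph) : option (term (hvert H)) :=
  term_sum [seq Mul (Mul (Var t.1.1) (Var t.1.2)) (Var t.2)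
           | t <- [seq (p, w) | p <- [seq (u, v) | u <- enum (hvert H), v <- enum (hvert H)],
                                 w <- enum (hvert H)]
           & [set t.1.1; t.1.2; t.2] \in hedges H].

(* V(Sigma) satisfies t_H ~ t_H + w  (t_H must exist, i.e. E nonempty) *)
Definition sat_tH (Sigma : identities) (H : hypergraph) (w : term (hvert H)) : Prop :=
  match tH H with
  | Some t => variety_sat Sigma t (Add t w)
  | None => False
  end.

From HB Require Import structures.
From Stdlib Require Import Classical.
From mathcomp Require Import all_boot zify.
Set Implicit Arguments. Unset Strict Implicit. Unset Printing Implicit Defensive.

(* Fix [H := H n] for [n] large and let [K := 3 * 'C(3 * n, 2)]. Both [S_c(abc)] and [S_H] are
   flat, so a term has a value other than infinity exactly when all its words share that value.
   If [u ~ v] holds in [S_c(abc)] and [u] has at most [K] variable occurrences, then [u ~ v] holds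
   in [S_H]: a word of [v] disagreeing with the common value of the words of [u] can be separated
   from them by an assignment into [S_c(abc)]. When that value is [a] the assignment comes from a
   rainbow 3-colouring of the edges spanned by the at most [K] vertices involved; since the girth
   exceeds [K] these edges form a forest, whose rainbow colourings are flexible enough to keep the
   bad word from evaluating to [abc]. Hence if [F] were a finite basis, [S_H] would satisfy [F]
   for [n] large, so would lie in the variety, while [t_H ~ t_H + w_n] fails in [S_H] because
   [t_H] evaluates to [a] and [w_n] does not. *)

(** * Words and flat semirings *)

Section Words.
Variable X : eqType.

(* The words of [t]: modulo the ai-semiring axioms, [t] is their sum. *)
Fixpoint words (t : term X) : seq (seq X) :=
  match t with
  | Var x => [:: [:: x]]
  | Add t1 t2 => words t1 ++ words t2
  | Mul t1 t2 => [seq w1 ++ w2 | w1 <- words t1, w2 <- words t2]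
  end.

Fixpoint occ (t : term X) : seq X :=
  match t with
  | Var x => [:: x]
  | Add t1 t2 | Mul t1 t2 => occ t1 ++ occ t2
  end.

Lemma words_exists (t : term X) : exists w, w \in words t.
Proof.
elim: t => [x|t1 [w1 h1] t2 _|t1 [w1 h1] t2 [w2 h2]] /=.
- by exists [:: x]; rewrite inE.
- by exists w1; rewrite mem_cat h1.
- by exists (w1 ++ w2); apply: allpairs_f.
Qed.

Lemma mem_words_neq0 (t : term X) w : w \in words t -> w != [::].
Proof.
elim: t w => [x|t1 IH1 t2 IH2|t1 IH1 t2 IH2] w /=.
- by rewrite inE => /eqP ->.
- by rewrite mem_cat => /orP [/IH1|/IH2].
- by case/allpairsP => [[w1 w2] [/= /IH1 + _ ->]]; case: w1.
Qed.

Lemma mem_words_occ (t : term X) w : w \in words t -> {subset w <= occ t}.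
Proof.
elim: t w => [x|t1 IH1 t2 IH2|t1 IH1 t2 IH2] w /=.
- by rewrite inE => /eqP ->.
- by rewrite mem_cat => /orP [/IH1|/IH2] sub y /sub; rewrite mem_cat => ->; rewrite ?orbT.
- case/allpairsP => [[w1 w2] [/= /IH1 sub1 /IH2 sub2 ->]] y.
  by rewrite !mem_cat => /orP [/sub1|/sub2] ->; rewrite ?orbT.
Qed.

End Words.

Section FlatSemiring.
Variables (A : eqType) (inf : A) (add mul : A -> A -> A).
Hypothesis addE : forall x y, add x y = if x == y then x else inf.
Hypothesis mulA : associative mul.
Hypothesis mul0l : left_zero inf mul.
Hypothesis mul0r : right_zero inf mul.
Hypothesis mulIr : forall x y z, mul x z = mul y z -> mul x z != inf -> x = y.
Hypothesis mulIl : forall x y z, mul z x = mul z y -> mul z x != inf -> x = y.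

Lemma flat_addA : associative add.
Proof.
move=> x y z; rewrite !addE; case: (eqVneq y z) => [->|nyz].
  by case: (eqVneq x z) => [->|_]; rewrite ?eqxx ?if_same.
by case: (eqVneq x y) => [->|_]; rewrite ?(negbTE nyz) ?if_same //; case: eqP.
Qed.

Lemma flat_addC : commutative add.
Proof. by move=> x y; rewrite !addE eq_sym; case: eqP => // ->. Qed.

Lemma flat_addI x : add x x = x.
Proof. by rewrite addE eqxx. Qed.

Lemma flat_mulDl : left_distributive mul add.
Proof.
move=> x y z; rewrite !addE; case: (eqVneq x y) => [->|nxy]; rewrite ?eqxx // mul0l.
case: eqP => // exyz; case: (eqVneq (mul x z) inf) => // nz.
by rewrite (mulIr exyz nz) eqxx in nxy.
Qed.

Lemma flat_mulDr : right_distributive mul add.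
Proof.
move=> x y z; rewrite !addE; case: (eqVneq y z) => [->|nyz]; rewrite ?eqxx // mul0r.
case: eqP => // exyz; case: (eqVneq (mul x y) inf) => // nz.
by rewrite (mulIl exyz nz) eqxx in nyz.
Qed.

Definition flat_ais : aisemiring :=
  @AiSemiring A add mul flat_addA flat_addC flat_addI mulA flat_mulDl flat_mulDr.

Variable X : eqType.
Implicit Types (s : X -> A) (w : seq X) (t : term X).

(* The empty word never occurs in [words t]; its value [inf] is a junk value. *)
Definition evalw s w : A :=
  if w is x :: r then foldl (fun a y => mul a (s y)) (s x) r else inf.

Lemma evalw_cat s w1 w2 : w1 != [::] -> w2 != [::] ->
  evalw s (w1 ++ w2) = mul (evalw s w1) (evalw s w2).
Proof.
case: w1 => [//|x r1] _; case: w2 => [//|y r2] _ /=; rewrite foldl_cat /=.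
by elim: r2 (s y) => [|z r IH] b //=; rewrite -mulA IH.
Qed.

Lemma foldl_mul0 s r : foldl (fun a y => mul a (s y)) inf r = inf.
Proof. by elim: r => [|z r IH] //=; rewrite mul0l. Qed.

Lemma evalw_inf s w x : x \in w -> s x = inf -> evalw s w = inf.
Proof.
case: w => [//|y r] /=; rewrite inE => /predU1P [-> ->|]; first exact: foldl_mul0.
move=> hx hs; elim: r (s y) hx => [//|z r IH] a /=.
by rewrite inE => /predU1P [<-|/IH //]; rewrite hs mul0r foldl_mul0.
Qed.

Lemma eq_in_evalw s1 s2 w : {in w, s1 =1 s2} -> evalw s1 w = evalw s2 w.
Proof.
case: w => [//|x r] /= h; rewrite h ?mem_head //.
have {h} : {in r, s1 =1 s2} by move=> y hy; apply: h; rewrite inE hy orbT.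
elim: r (s2 x) => [//|y r IH] a h /=.
by rewrite h ?mem_head // IH // => z hz; apply: h; rewrite inE hz orbT.
Qed.

Lemma evalw_size_gt3 s w :
  (forall a b c d, mul (mul (mul a b) c) d = inf) -> 3 < size w -> evalw s w = inf.
Proof. by move=> nil4; case: w => [|x [|y [|z [|t r]]]] //= _; rewrite nil4 foldl_mul0. Qed.

Lemma eval_words s t (a : A) : eval add mul s t = a -> a != inf ->
  forall w, w \in words t -> evalw s w = a.
Proof.
elim: t a => [x|t1 IH1 t2 IH2|t1 IH1 t2 IH2] a /=.
- by move=> <- _ w; rewrite inE => /eqP ->.
- rewrite addE; case: eqP => [e12 e1|_ <-]; last by rewrite eqxx.
  move=> na w; rewrite mem_cat => /orP [].
    exact: IH1.
  by apply: (IH2 a) => //; rewrite -e12.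
- move=> ea na w /allpairsP [[w1 w2] [/= h1 h2 ->]].
  have n1 : eval add mul s t1 != inf by apply: contraNneq na => e; rewrite -ea e mul0l.
  have n2 : eval add mul s t2 != inf by apply: contraNneq na => e; rewrite -ea e mul0r.
  rewrite evalw_cat ?(mem_words_neq0 h1) ?(mem_words_neq0 h2) //.
  by rewrite (IH1 _ erefl n1 _ h1) (IH2 _ erefl n2 _ h2).
Qed.

Lemma words_eval s t (a : A) : (forall w, w \in words t -> evalw s w = a) -> a != inf ->
  eval add mul s t = a.
Proof.
elim: t a => [x|t1 IH1 t2 IH2|t1 IH1 t2 IH2] a /= h na.
- by apply: (h [:: x]); rewrite inE.
- by rewrite addE (IH1 a) ?(IH2 a) ?eqxx // => w hw; apply: h; rewrite mem_cat hw ?orbT.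
have [w1 h1] := words_exists t1; have [w2 h2] := words_exists t2.
have hw b c : b \in words t1 -> c \in words t2 -> mul (evalw s b) (evalw s c) = a.
  move=> hb hc; rewrite -evalw_cat ?(mem_words_neq0 hb) ?(mem_words_neq0 hc) //.
  by apply: h; apply: allpairs_f.
have e12 := hw _ _ h1 h2.
have n1 : evalw s w1 != inf by apply: contraNneq na => e; rewrite -e12 e mul0l.
have n2 : evalw s w2 != inf by apply: contraNneq na => e; rewrite -e12 e mul0r.
rewrite (IH1 (evalw s w1)) ?(IH2 (evalw s w2)) // => [c hc|b hb].
  by apply: (@mulIl _ _ (evalw s w1)); rewrite !hw.
by apply: (@mulIr _ _ (evalw s w2)); rewrite !hw.
Qed.

Lemma eval_wordsP s t (a : A) : a != inf ->
  eval add mul s t = a <-> forall w, w \in words t -> evalw s w = a.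
Proof. by move=> na; split => [/eval_words|/words_eval]; apply. Qed.

End FlatSemiring.

(** * The flat semirings S_c(abc) and S_H *)

Lemma Sc_mulA : associative Sc_mul.
Proof. by move=> [[[] []] []] [[[] []] []] [[[] []] []]. Qed.

Lemma Sc_mulC : commutative Sc_mul.
Proof. by move=> [[[] []] []] [[[] []] []]. Qed.

Lemma Sc_mul0l : left_zero Sc_inf Sc_mul.
Proof. by move=> [[[] []] []]. Qed.

Lemma Sc_mul0r : right_zero Sc_inf Sc_mul.
Proof. by move=> [[[] []] []]. Qed.

Lemma Sc_mulIr (x y z : Sc) : Sc_mul x z = Sc_mul y z -> Sc_mul x z != Sc_inf -> x = y.
Proof. by move: x y z => [[[] []] []] [[[] []] []] [[[] []] []]. Qed.

Lemma Sc_mulIl (x y z : Sc) : Sc_mul z x = Sc_mul z y -> Sc_mul z x != Sc_inf -> x = y.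
Proof. by rewrite !(Sc_mulC z); apply: Sc_mulIr. Qed.

Definition Sc_ais : aisemiring :=
  flat_ais (fun _ _ => erefl) Sc_mulA Sc_mul0l Sc_mul0r Sc_mulIr Sc_mulIl.

Definition abc : Sc := (true, true, true).

Lemma Sc_mul3 (x y z : Sc) : Sc_mul (Sc_mul x y) z = Sc_inf \/ Sc_mul (Sc_mul x y) z = abc.
Proof. by move: x y z => [[[] []] []] [[[] []] []] [[[] []] []]; auto. Qed.

Lemma Sc_mul4 (x y z t : Sc) : Sc_mul (Sc_mul (Sc_mul x y) z) t = Sc_inf.
Proof. by case: (Sc_mul3 x y z) => ->; case: t => [[[] []] []]. Qed.

Lemma Sc_eval_wordsP (X : eqType) (s : X -> Sc) (t : term X) a : a != Sc_inf ->
  eval Sc_add Sc_mul s t = a <-> forall w, w \in words t -> evalw Sc_inf Sc_mul s w = a.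
Proof. exact: (eval_wordsP (fun _ _ => erefl) Sc_mulA Sc_mul0l Sc_mul0r Sc_mulIr Sc_mulIl). Qed.

Lemma Sc_evalw_size_gt3 (X : eqType) (s : X -> Sc) w :
  3 < size w -> evalw Sc_inf Sc_mul s w = Sc_inf.
Proof. exact: (evalw_size_gt3 Sc_mul0l s Sc_mul4). Qed.

Inductive colour := Ca | Cb | Cc.

Definition letter (c : colour) : Sc :=
  match c with
  | Ca => (true, false, false) | Cb => (false, true, false) | Cc => (false, false, true)
  end.

Definition coletter (c : colour) : Sc :=
  match c with
  | Ca => (false, true, true) | Cb => (true, false, true) | Cc => (true, true, false)
  end.

Lemma mul_letter_coletter c : Sc_mul (letter c) (coletter c) = abc.
Proof. by case: c. Qed.

Lemma mul_letters_rainbow c1 c2 c3 : c1 <> c2 -> c1 <> c3 -> c2 <> c3 ->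
  Sc_mul (Sc_mul (letter c1) (letter c2)) (letter c3) = abc.
Proof. by case: c1; case: c2; case: c3. Qed.

Section ThreeSets.
Variable T : finType.
Implicit Types a b c x : T.

Lemma set3C12 a b c : [set a; b; c] = [set b; a; c].
Proof. by rewrite (setUC [set a]). Qed.

Lemma set3C23 a b c : [set a; b; c] = [set a; c; b].
Proof. by rewrite setUAC. Qed.

Lemma set3_rot a b c : [set b; c; a] = [set a; b; c].
Proof. by apply/setP => x; rewrite !inE; case: (x == a); case: (x == b); case: (x == c). Qed.

Lemma in_set3 a b c x : (x \in [set a; b; c]) = [|| x == a, x == b | x == c].
Proof. by rewrite !inE orbA. Qed.

Lemma card_set3 a b c : (#|[set a; b; c]| == 3) = [&& a != b, a != c & b != c].
Proof.
rewrite -setUA cardsU1 cards2 !inE negb_or.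
by case: (a != b); case: (a != c); case: (b != c).
Qed.

Lemma card3_set3 (e : {set T}) a b c : #|e| = 3 -> a != b -> a != c -> b != c ->
  a \in e -> b \in e -> c \in e -> e = [set a; b; c].
Proof.
move=> he nab nac nbc ha hb hc; apply/eqP; rewrite eq_sym eqEcard he.
have /eqP -> : #|[set a; b; c]| == 3 by rewrite card_set3 nab nac nbc.
by rewrite leqnn andbT; apply/subsetP => x; rewrite in_set3 => /or3P [] /eqP ->.
Qed.

Lemma card3_other (e : {set T}) x : #|e| = 3 -> exists2 a, a \in e & a != x.
Proof.
move=> he; have : 0 < #|e :\ x| by move: he; rewrite (cardsD1 x e); case: (x \in e) => /=; lia.
by case/card_gt0P => a; rewrite !inE => /andP [? ?]; exists a.
Qed.

Lemma card3_third (e : {set T}) x y : #|e| = 3 -> x \in e -> y \in e -> x != y ->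
  exists z, [/\ z \in e, z != x, z != y & e = [set x; y; z]].
Proof.
move=> he hx hy nxy.
have : 0 < #|e :\ x :\ y|.
  by move: he; rewrite (cardsD1 x) hx (cardsD1 y) !inE eq_sym nxy hy; lia.
case/card_gt0P => z; rewrite !inE => /and3P [nzy nzx hz].
by exists z; split => //; apply: card3_set3; rewrite // eq_sym.
Qed.

End ThreeSets.

Definition linear_hypergraph (H : hypergraph) : Prop :=
  forall e1 e2 a b, e1 \in hedges H -> e2 \in hedges H -> a != b ->
    a \in e1 -> b \in e1 -> a \in e2 -> b \in e2 -> e1 = e2.

(* Two edges sharing two vertices form a cycle of length 2. *)
Lemma girth_gt_linear (H : hypergraph) K : 2 <= K -> girth_gt H K -> linear_hypergraph H.
Proof.
move=> hK hg e1 e2 a b h1 h2 nab a1 b1 a2 b2.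
apply/eqP/negPn/negP => n12; apply: (hg 2 hK); split => //.
exists (fun i => if i == 0 then a else b), (fun i => if i == 0 then e1 else e2).
split; try by move=> [|[|i]].
- by move=> [|[|i]] [|[|j]] //= _ _ e; move: nab; rewrite e eqxx.
- by move=> [|[|i]] [|[|j]] //= _ _ e; move: n12; rewrite e eqxx.
- by split => // [[|[|i]]].
Qed.

Lemma sh_eqbP (V : eqType) : Equality.axiom (@sh_eqb V).
Proof.
by move=> [| |u|u] [| |v|v] /=; try constructor; try apply: (iffP eqP) => [->|[]].
Qed.

HB.instance Definition _ (V : eqType) := hasDecEq.Build (sh_elt V) (@sh_eqbP V).

Section HypergraphSemiring.
Variable H : hypergraph.
Local Notation V := (hvert H).
Local Notation E := (hedges H).
Local Notation shm := (@sh_mul H).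
Hypothesis H3 : uniform3 H.
Hypothesis Hlin : linear_hypergraph H.
Implicit Types (a b c p q r : V) (x y z : sh_elt V).

Lemma edge3_neq a b c : [set a; b; c] \in E -> [/\ a != b, a != c & b != c].
Proof. by move/H3/eqP; rewrite card_set3 => /and3P. Qed.

Lemma edge3_uniq a b p q : [set a; b; p] \in E -> [set a; b; q] \in E -> p = q.
Proof.
move=> hp hq; have [nab nap nbp] := edge3_neq hp.
have e : [set a; b; p] = [set a; b; q] by apply: (Hlin hp hq nab); rewrite !inE eqxx ?orbT.
have : p \in [set a; b; q] by rewrite -e !inE eqxx ?orbT.
by rewrite in_set3 => /or3P [] /eqP // ep; rewrite ep eqxx in nap nbp.
Qed.

Lemma sh_mulAv_edge a b c : [set a; b; c] \in E -> shm (SAv a) (SAv b) = SCv c.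
Proof.
move=> he /=; case: pickP => [p hp|h]; first by rewrite (edge3_uniq hp he).
by rewrite h in he.
Qed.

Lemma sh_mulAv_SCv a b c : shm (SAv a) (SAv b) = SCv c -> [set a; b; c] \in E.
Proof. by rewrite /=; case: pickP => [p hp [<-] | //]. Qed.

Lemma sh_mulAv_cases a b : shm (SAv a) (SAv b) = SInf \/ exists c, shm (SAv a) (SAv b) = SCv c.
Proof. by rewrite /=; case: pickP => [p _|_]; [right; exists p | left]. Qed.

Lemma sh_mulAv3 a b c :
  shm (shm (SAv a) (SAv b)) (SAv c) = if [set a; b; c] \in E then SA else SInf.
Proof.
case: ifP => he; first by rewrite (sh_mulAv_edge he) /= eqxx.
rewrite /=; case: pickP => [p hp|//] /=; case: eqP => // ep.
by rewrite ep hp in he.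
Qed.

Lemma sh_mulC : commutative shm.
Proof.
case=> [| |a|a] [| |b|b] //=.
by rewrite (eq_pick (Q := fun p => [set b; a; p] \in E)) // => p; rewrite set3C12.
Qed.

Lemma sh_mulA : associative shm.
Proof.
case=> [| |a|a] [| |b|b] [| |c|c] //.
all: try by rewrite sh_mulAv3 sh_mulC sh_mulAv3 set3_rot.
all: rewrite /=; try (case: pickP => [? ?|?]); try (case: pickP => [? ?|?]); rewrite /=;
  try case: eqP; try case: eqP; done.
Qed.

Lemma sh_mul0l : left_zero SInf shm.
Proof. by []. Qed.

Lemma sh_mul0r : right_zero SInf shm.
Proof. by case. Qed.

Lemma sh_mulIr x y z : shm x z = shm y z -> shm x z != SInf -> x = y.
Proof.
case: z => [| |c|c]; case: x => [| |a|a] //; case: y => [| |b|b] //;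
  try by move=> /= + /eqP; do ?[case: pickP => [? _|_] | case: eqP => [->|]].
2,3: by rewrite /=; case: pickP => [? _|_]; case: eqP.
case: (sh_mulAv_cases a c) => [->//|[p ep]]; rewrite ep => ep' _.
have ha := sh_mulAv_SCv ep; have hb := sh_mulAv_SCv (esym ep').
rewrite set3C12 set3C23 in ha; rewrite set3C12 set3C23 in hb.
by rewrite (edge3_uniq ha hb).
Qed.

Lemma sh_mulIl x y z : shm z x = shm z y -> shm z x != SInf -> x = y.
Proof. by rewrite !(sh_mulC z); apply: sh_mulIr. Qed.

Definition SH_ais : aisemiring :=
  flat_ais (fun _ _ => erefl) sh_mulA sh_mul0l sh_mul0r sh_mulIr sh_mulIl.

Lemma SH_eval_wordsP (X : eqType) (s : X -> sh_elt V) (t : term X) x : x != SInf ->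
  eval (@sh_add H) shm s t = x <-> forall w, w \in words t -> evalw SInf shm s w = x.
Proof. exact: (eval_wordsP (fun _ _ => erefl) sh_mulA sh_mul0l sh_mul0r sh_mulIr sh_mulIl). Qed.

Lemma sh_mul2_SA x y : shm x y = SA ->
  exists p, (x = SAv p /\ y = SCv p) \/ (x = SCv p /\ y = SAv p).
Proof.
case: x => [| |p|p]; case: y => [| |q|q] //=; first by case: pickP.
- by case: eqP => // <-; exists p; left.
- by case: eqP => // ->; exists p; right.
Qed.

Lemma sh_mul2_SCv x y c : shm x y = SCv c ->
  exists p q, [/\ x = SAv p, y = SAv q & [set p; q; c] \in E].
Proof.
case: x => [| |p|p]; case: y => [| |q|q] //=; try by case: eqP.
by move=> h; exists p, q; split => //; apply: sh_mulAv_SCv.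
Qed.

Lemma sh_mul2_neq_SAv x y p : shm x y != SAv p.
Proof.
by case: x => [| |a|a]; case: y => [| |b|b] //=; [case: pickP | case: ifP | case: ifP].
Qed.

Lemma sh_mul3 x y z : shm (shm x y) z = SA \/ shm (shm x y) z = SInf.
Proof.
case: x => [| |p|p]; case: y => [| |q|q]; try by right.
- case: (sh_mulAv_cases p q) => [->|[c ->]]; first by right.
  by case: z => [| |r|r] /=; try (by right); case: eqP; auto.
- by rewrite /=; case: eqP => _; right.
- by rewrite /=; case: eqP => _; right.
Qed.

Lemma sh_mul3_SA x y z : shm (shm x y) z = SA ->
  exists p q r, [/\ x = SAv p, y = SAv q, z = SAv r & [set p; q; r] \in E].
Proof.
case: x => [| |p|p]; case: y => [| |q|q] //; try by rewrite /=; case: eqP.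
case: z => [| |r|r]; try by case: (sh_mulAv_cases p q) => [->|[c ->]].
by rewrite sh_mulAv3; case: ifP => // he _; exists p, q, r.
Qed.

Lemma sh_mul4 x y z t : shm (shm (shm x y) z) t = SInf.
Proof. by case: (sh_mul3 x y z) => ->. Qed.

Lemma SH_evalw_size_gt3 (X : eqType) (s : X -> sh_elt V) w :
  3 < size w -> evalw SInf shm s w = SInf.
Proof. exact: (evalw_size_gt3 sh_mul0l s sh_mul4). Qed.

End HypergraphSemiring.

(** * Edge sets of a hypergraph of large girth *)

Lemma injective_in_upd (T : eqType) (f : nat -> T) k a :
  {in gtn k &, injective f} -> (forall i, i < k -> f i != a) ->
  {in gtn k.+1 &, injective (fun i => if i == k then a else f i)}.
Proof.
move=> inj fa i j; rewrite !inE => hi hj.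
case: eqP => [->|ni]; case: eqP => [->|nj] // e.
- by move: (fa j); rewrite -e eqxx => /(_ ltac:(lia)).
- by move: (fa i); rewrite e eqxx => /(_ ltac:(lia)).
- by apply: inj; rewrite ?inE //; lia.
Qed.

Definition leaf_edge (V : finType) (E' : {set {set V}}) (e : {set V}) (x y z : V) :=
  [/\ e \in E', e = [set x; y; z], [&& x != y, x != z & y != z]
    & forall e2, e2 \in E' -> e2 != e -> (y \notin e2) && (z \notin e2)].

Section Forest.
Variable H : hypergraph.
Local Notation V := (hvert H).
Local Notation E := (hedges H).
Variable K : nat.
Hypothesis Hg : girth_gt H K.
Hypothesis H3 : uniform3 H.
Variable P : {set V}.
Hypothesis HP : #|P| <= K.
Variable E' : {set {set V}}.
Hypothesis HE' : forall e, e \in E' -> e \in E /\ e \subset P.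

(* The path [vs 0, es 0, vs 1, ..., es k.-1, vs k] of [k] distinct edges of [E'] through
   distinct vertices. *)
Definition hpath k (vs : nat -> V) (es : nat -> {set V}) :=
  [/\ {in gtn k.+1 &, injective vs}, {in gtn k &, injective es},
      forall i, i < k -> es i \in E', forall i, i < k -> vs i \in es i
    & forall i, i < k -> vs i.+1 \in es i].

Lemma hpath_drop k vs es j : hpath k vs es -> j <= k ->
  hpath (k - j) (fun i => vs (j + i)) (fun i => es (j + i)).
Proof.
move=> [hv he hE hin hs] hj; split.
- by move=> a b; rewrite !inE => ha hb /hv; rewrite !inE => /(_ ltac:(lia) ltac:(lia)); lia.
- by move=> a b; rewrite !inE => ha hb /he; rewrite !inE => /(_ ltac:(lia) ltac:(lia)); lia.
- by move=> i hi; apply: hE; lia.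
- by move=> i hi; apply: hin; lia.
- by move=> i hi; rewrite addnS; apply: hs; lia.
Qed.

(* A path and a fresh edge through both of its ends close a cycle inside [P]. *)
Lemma hpath_closing_edge k vs es e : hpath k vs es -> 0 < k -> e \in E' ->
  (forall i, i < k -> es i != e) -> vs 0 \in e -> vs k \in e -> False.
Proof.
move=> [hv he hE hin hs] hk heE fresh h0 hk'.
have hcard : k.+1 <= #|P|.
  have inj : injective (fun i : 'I_k.+1 => vs i).
    by move=> i j /hv e'; apply/val_inj/e'; rewrite inE.
  rewrite -[k.+1]card_ord -(card_imset _ inj); apply: subset_leq_card.
  apply/subsetP => _ /imsetP [i _ ->]; have := ltn_ord i; rewrite ltnS leq_eqVlt.
  case/predU1P => [->|hi]; first by have [_ /subsetP] := HE' heE; apply.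
  by have [_ /subsetP] := HE' (hE i hi); apply; apply: hin.
apply: (Hg (leq_trans hcard HP)); split; first by lia.
exists vs, (fun i => if i == k then e else es i); split => //.
- exact: injective_in_upd.
- move=> i hi; case: eqP => ni; first exact: (HE' heE).1.
  by apply: (HE' (hE i _)).1; lia.
- move=> i hi; case: eqP => [->//|ni]; apply: hin; lia.
- split; first by rewrite /= eqxx.
  by move=> i hi; case: eqP => [|_]; [lia | apply: hs; lia].
Qed.

Lemma hpath_rcons k vs es e a : hpath k vs es -> e \in E' -> (forall i, i < k -> es i != e) ->
  vs k \in e -> a \in e -> (forall i, i <= k -> vs i != a) ->
  hpath k.+1 (fun i => if i == k.+1 then a else vs i) (fun i => if i == k then e else es i).
Proof.
move=> [hv he hE hin hs] heE fresh hk ha new; split.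
- exact: injective_in_upd.
- exact: injective_in_upd.
- by move=> i hi; case: eqP => // ni; apply: hE; lia.
- by move=> i hi; case: eqP => [|_]; [lia | case: eqP => [->//|ni]; apply: hin; lia].
- move=> i hi; case: eqP => [[->]|ni]; first by rewrite eqxx.
  by case: eqP => [|nik]; [lia | apply: hs; lia].
Qed.

Lemma hpath_closing_suffix k vs es j e : hpath k vs es -> j < k -> e \in E' ->
  (forall i, j <= i < k -> es i != e) -> vs j \in e -> vs k \in e -> False.
Proof.
move=> hp hj heE fresh hvj hvk.
apply: (hpath_closing_edge (hpath_drop hp (ltnW hj)) _ heE).
- by rewrite subn_gt0.
- by move=> i hi; apply: fresh; lia.
- by rewrite addn0.
- by rewrite subnKC // ltnW.
Qed.

Lemma hpath_extend k vs es e : 0 < k -> hpath k vs es -> e \in E' -> e != es k.-1 ->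
  vs k \in e -> exists vs' es', hpath k.+1 vs' es'.
Proof.
move=> hk hp heE ne hke; have [_ he _ _ hs] := hp.
case: (classic (exists2 j, j < k & es j = e)) => [[j hj ej] | fresh].
  have hjk : j.+1 < k.
    by rewrite ltn_neqAle hj andbT; apply: contra_neq ne => ek; rewrite -ej -ek.
  apply: False_ind; apply: (hpath_closing_suffix hp hjk heE) => //; last by rewrite -ej hs.
  move=> i /andP [hji hik]; rewrite -ej; apply/eqP => /he; rewrite !inE; lia.
have [a ha nak] := card3_other (vs k) (H3 (HE' heE).1).
have fresh' i : i < k -> es i != e by move=> hi; apply/eqP => ei; apply: fresh; exists i.
case: (classic (exists2 j, j <= k & vs j = a)) => [[j hj ej] | anew].
  have hjk : j < k by rewrite ltn_neqAle hj andbT; apply: contra_neq nak => ejk; rewrite -ej ejk.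
  apply: False_ind; apply: (hpath_closing_suffix hp hjk heE) => //; last by rewrite ej.
  by move=> i /andP [_ /fresh'].
exists (fun i => if i == k.+1 then a else vs i), (fun i => if i == k then e else es i).
by apply: hpath_rcons => // i hi; apply/eqP => ei; apply: anew; exists i.
Qed.

Lemma hpath_take k vs es j : hpath k vs es -> j <= k -> hpath j vs es.
Proof.
move=> [hv he hE hin hs] hj; split.
- by move=> a b; rewrite !inE => ha hb; apply: hv; rewrite inE; lia.
- by move=> a b; rewrite !inE => ha hb; apply: he; rewrite inE; lia.
- by move=> i hi; apply: hE; lia.
- by move=> i hi; apply: hin; lia.
- by move=> i hi; apply: hs; lia.
Qed.

Lemma hpath_switch_end k vs es z : hpath k.+1 vs es -> z \in es k -> z != vs k ->
  hpath k.+1 (fun i => if i == k.+1 then z else vs i) es.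
Proof.
move=> hp hz nzk; have [_ he hE hin hs] := hp.
case: (classic (exists2 j, j < k & vs j = z)) => [[j hj ej] | znew].
  apply: False_ind; apply: (hpath_closing_suffix (hpath_take hp (leqnSn k)) hj (hE k _)) => //.
  - by move=> i /andP [_ hik]; apply/eqP => /he; rewrite !inE; lia.
  - by rewrite ej.
  - exact: hin.
split => //.
- apply: injective_in_upd; first by case: (hpath_take hp (leqnSn k)).
  move=> i; rewrite ltnS leq_eqVlt; case/predU1P => [->|hi]; first by rewrite eq_sym.
  by apply/eqP => ei; apply: znew; exists i.
- by move=> i hi; case: eqP => [|_]; [lia | apply: hin].
- by move=> i hi; case: eqP => [[->]//|ni]; apply: hs.
Qed.

Lemma hpath_start : E' != set0 -> exists vs es, hpath 1 vs es.
Proof.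
case/set0Pn => e he; have he3 := H3 (HE' he).1.
have /card_gt0P [x hx] : 0 < #|e| by rewrite he3.
have [y hy nyx] := card3_other x he3.
exists (fun i => if i == 0 then x else y), (fun _ => e); split; try by case.
- by move=> [|[|a]] [|[|b]] //; rewrite !inE //= => _ _ exy; move: nyx; rewrite exy eqxx.
- by move=> [|a] [|b]; rewrite !inE.
Qed.

(* Without a leaf every path could be prolonged, but no path has more edges than [E']. *)
Lemma exists_leaf_edge : E' != set0 -> exists e x y z, leaf_edge E' e x y z.
Proof.
move=> hne; apply: NNPP => noleaf.
have hpaths k : exists vs es, hpath k.+1 vs es.
  elim: k => [|k [vs [es hp]]]; first exact: hpath_start.
  have [hv _ hE hin hs] := hp; have hk := ltnSn k.
  have nxy : vs k != vs k.+1 by apply/eqP => /hv; rewrite !inE => /(_ ltac:(lia) ltac:(lia)); lia.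
  have [z [hz nzx nzy ez]] := card3_third (H3 (HE' (hE k hk)).1) (hin k hk) (hs k hk) nxy.
  have [e2 [h2 n2 /orP [y2|z2]]] :
      exists e2, [/\ e2 \in E', e2 != es k & (vs k.+1 \in e2) || (z \in e2)].
    apply: NNPP => nex; apply: noleaf; exists (es k), (vs k), (vs k.+1), z; split => //.
    - exact: hE.
    - by rewrite nxy eq_sym nzx eq_sym nzy.
    - by move=> e2 h2 n2; rewrite -negb_or; apply/negP => hyz; apply: nex; exists e2.
  - exact: (hpath_extend (ltn0Sn k) hp h2 n2 y2).
  - by apply: (hpath_extend (ltn0Sn k) (hpath_switch_end hp hz nzx) h2 n2); rewrite /= eqxx.
have [vs [es [_ he hE _ _]]] := hpaths #|E'|.
have inj : injective (fun i : 'I_#|E'|.+1 => es i).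
  by move=> i j /he e; apply/val_inj/e; rewrite inE.
have sub : [set es i | i : 'I_#|E'|.+1] \subset E'.
  by apply/subsetP => _ /imsetP [i _ ->]; apply: hE.
by have := subset_leq_card sub; rewrite card_imset // card_ord ltnn.
Qed.

End Forest.

(** * Rainbow colourings of forests *)

Lemma colour_avoid1 (c : colour) : exists a b, [/\ a <> c, b <> c & a <> b].
Proof. by case: c; [exists Cb, Cc | exists Ca, Cc | exists Ca, Cb]. Qed.

Lemma colour_avoid2 (c d : colour) : exists a b, [/\ a <> c, a <> d, b <> c & b <> a].
Proof.
by case: c; case: d; first [by exists Cb, Cc | by exists Cc, Cb | by exists Ca, Cc
  | by exists Cc, Ca | by exists Ca, Cb | by exists Cb, Ca].
Qed.

Lemma colour_third (c d : colour) : c <> d -> exists2 b, b <> c & b <> d.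
Proof. by case: c; case: d => // _; first [by exists Ca | by exists Cb | by exists Cc]. Qed.

Definition rainbow (V : finType) (col : V -> colour) (E' : {set {set V}}) :=
  forall e, e \in E' -> forall a b, a \in e -> b \in e -> a != b -> col a <> col b.

Definition flexible (V : finType) (E' : {set {set V}}) :=
  [/\ exists col, rainbow col E',
      forall p q, p != q -> exists2 col, rainbow col E' & col p <> col q
    & forall p q, p != q -> (forall e, e \in E' -> ~~ ((p \in e) && (q \in e))) ->
        exists2 col, rainbow col E' & col p = col q].

Lemma flexible0 (V : finType) : flexible (set0 : {set {set V}}).
Proof.
have r0 col : rainbow col set0 by move=> e; rewrite in_set0.
split; [by exists (fun _ => Ca) | | by move=> p q _ _; exists (fun _ => Ca)].
move=> p q npq; exists (fun v => if v == p then Ca else Cb) => //.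
by rewrite eqxx eq_sym (negbTE npq).
Qed.

Lemma leaf_edge_sym (V : finType) (E' : {set {set V}}) e x y z :
  leaf_edge E' e x y z -> leaf_edge E' e x z y.
Proof.
case=> he ez /and3P [nxy nxz nyz] hl; split => //; first by rewrite ez set3C23.
- by rewrite nxz nxy eq_sym nyz.
- by move=> e2 h2 n2; rewrite andbC hl.
Qed.

Section LeafExtension.
Variables (V : finType) (E' : {set {set V}}) (e : {set V}) (x y z : V).
Hypothesis Hleaf : leaf_edge E' e x y z.
Local Notation E2 := (E' :\ e).

Definition recolour (col : V -> colour) cy cz v :=
  if v == y then cy else if v == z then cz else col v.

Lemma rainbow_recolour col cy cz : rainbow col E2 -> cy <> col x -> cz <> col x -> cy <> cz ->
  rainbow (recolour col cy cz) E'.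
Proof.
have [he ez /and3P [nxy nxz nyz] hl] := Hleaf.
move=> hr h1 h2 h3 e2 h2e a b ha hb nab.
case: (eqVneq e2 e) => [ee|ne].
  have ux : recolour col cy cz x = col x by rewrite /recolour (negbTE nxy) (negbTE nxz).
  have uy : recolour col cy cz y = cy by rewrite /recolour eqxx.
  have uz : recolour col cy cz z = cz by rewrite /recolour eq_sym (negbTE nyz) eqxx.
  move: ha hb nab; rewrite ee ez !in_set3.
  by case/or3P => /eqP ->; case/or3P => /eqP ->; rewrite ?eqxx // => _;
    rewrite ?ux ?uy ?uz // => /esym.
have /andP [ny nz] := hl e2 h2e ne.
have hu v : v \in e2 -> recolour col cy cz v = col v.
  move=> hv; rewrite /recolour; case: eqP => [ev|_]; first by rewrite -ev hv in ny.
  by case: eqP => [ev|//]; rewrite -ev hv in nz.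
by rewrite !hu //; apply: (hr e2) => //; rewrite !inE ne.
Qed.

Lemma rainbow_extend col p q : rainbow col E2 -> p != y -> p != z -> q != y -> q != z ->
  exists2 col', rainbow col' E' & col' p = col p /\ col' q = col q.
Proof.
move=> hr py pz qy qz; have [a [b [ha hb hab]]] := colour_avoid1 (col x).
exists (recolour col a b); first exact: rainbow_recolour.
by rewrite /recolour (negbTE py) (negbTE pz) (negbTE qy) (negbTE qz).
Qed.

Lemma rainbow_leaf_neq q : (exists col, rainbow col E2) -> q != y ->
  exists2 col, rainbow col E' & col y <> col q.
Proof.
have [he ez /and3P [nxy nxz nyz] _] := Hleaf.
move=> [col hr] nqy; case: (boolP (q \in e)) => qe.
  have [a [b [ha hb hab]]] := colour_avoid1 (col x).
  have hr' := rainbow_recolour hr ha hb hab.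
  exists (recolour col a b) => //; apply: (hr' e he) => //; last by rewrite eq_sym.
  by rewrite ez !inE eqxx orbT.
have qz : q != z by apply: contraNneq qe => ->; rewrite ez !inE eqxx !orbT.
have [a [b [ha1 ha2 hb1 hb2]]] := colour_avoid2 (col x) (col q).
exists (recolour col a b); first by apply: rainbow_recolour => // /esym.
by rewrite /recolour eqxx (negbTE nqy) (negbTE qz).
Qed.

Lemma rainbow_leaf_eq q : (forall p q, p != q -> exists2 col, rainbow col E2 & col p <> col q) ->
  q != y -> (forall e2, e2 \in E' -> ~~ ((y \in e2) && (q \in e2))) ->
  exists2 col, rainbow col E' & col y = col q.
Proof.
have [he ez /and3P [nxy nxz nyz] _] := Hleaf.
move=> IHneq nqy hno.
have qe : q \notin e.
  by apply: contra (hno e he) => qe; rewrite qe ez !inE eqxx orbT.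
have qz : q != z by apply: contraNneq qe => ->; rewrite ez !inE eqxx !orbT.
have nxq : x != q by apply: contraNneq qe => <-; rewrite ez !inE eqxx.
have [col hr hxq] := IHneq x q nxq.
have [b hb1 hb2] := colour_third hxq.
exists (recolour col (col q) b); first by apply: rainbow_recolour => // /esym.
by rewrite /recolour eqxx (negbTE nqy) (negbTE qz).
Qed.

End LeafExtension.

Lemma flexible_leaf_extension (V : finType) (E' : {set {set V}}) e x y z :
  leaf_edge E' e x y z -> flexible (E' :\ e) -> flexible E'.
Proof.
move=> hleaf [IH0 IHneq IHeq].
have hleaf' := leaf_edge_sym hleaf.
have [_ _ /and3P [nxy nxz _] _] := hleaf.
have [col0 hr0] := IH0.
have hkeep p q col : rainbow col (E' :\ e) -> p \notin [:: y; z] -> q \notin [:: y; z] ->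
    exists2 col', rainbow col' E' & col' p = col p /\ col' q = col q.
  rewrite !inE !negb_or => hr /andP [py pz] /andP [qy qz]; exact: (rainbow_extend hleaf).
have xyz : x \notin [:: y; z] by rewrite !inE negb_or nxy nxz.
have sep_leaf v q : v \in [:: y; z] -> q != v -> exists2 col, rainbow col E' & col v <> col q.
  rewrite !inE => /orP [] /eqP -> nq.
  - exact: (rainbow_leaf_neq hleaf (ex_intro _ col0 hr0)).
  - exact: (rainbow_leaf_neq hleaf' (ex_intro _ col0 hr0)).
have eq_leaf v q : v \in [:: y; z] -> q != v ->
    (forall e2, e2 \in E' -> ~~ ((v \in e2) && (q \in e2))) ->
    exists2 col, rainbow col E' & col v = col q.
  rewrite !inE => /orP [] /eqP -> nq hno.
  - exact: (rainbow_leaf_eq hleaf IHneq).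
  - exact: (rainbow_leaf_eq hleaf' IHneq).
split.
- by have [col hr _] := hkeep x x col0 hr0 xyz xyz; exists col.
- move=> p q npq; case/boolP: (p \in [:: y; z]) => pyz.
    by apply: sep_leaf => //; rewrite eq_sym.
  case/boolP: (q \in [:: y; z]) => qyz.
    by have [col hr hc] := sep_leaf q p qyz npq; exists col => // /esym.
  have [col hr hc] := IHneq p q npq; have [col' hr' [hp hq]] := hkeep p q col hr pyz qyz.
  by exists col'; rewrite ?hp ?hq.
- move=> p q npq hno; case/boolP: (p \in [:: y; z]) => pyz.
    by apply: eq_leaf => //; rewrite eq_sym.
  case/boolP: (q \in [:: y; z]) => qyz.
    have hno' e2 : e2 \in E' -> ~~ ((q \in e2) && (p \in e2)) by move/hno; rewrite andbC.
    by have [col hr hc] := eq_leaf q p qyz npq hno'; exists col.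
  have hno' e2 : e2 \in E' :\ e -> ~~ ((p \in e2) && (q \in e2)).
    by rewrite !inE => /andP [_ /hno].
  have [col hr hc] := IHeq p q npq hno'.
  by have [col' hr' [hp hq]] := hkeep p q col hr pyz qyz; exists col'; rewrite ?hp ?hq.
Qed.

Section ForestColouring.
Variable H : hypergraph.
Local Notation V := (hvert H).
Local Notation E := (hedges H).
Variable K : nat.
Hypothesis Hg : girth_gt H K.
Hypothesis H3 : uniform3 H.
Variable P : {set V}.
Hypothesis HP : #|P| <= K.

Lemma flexible_forest (E' : {set {set V}}) :
  (forall e, e \in E' -> e \in E /\ e \subset P) -> flexible E'.
Proof.
move: {2}#|E'| (leqnn #|E'|) => n; elim: n E' => [|n IH] E' hn hE'.
  by move: hn; rewrite leqn0 cards_eq0 => /eqP ->; apply: flexible0.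
case: (eqVneq E' set0) => [->|ne]; first exact: flexible0.
have [e [x [y [z hleaf]]]] := exists_leaf_edge Hg H3 HP hE' ne.
have [he _ _ _] := hleaf; apply: (flexible_leaf_extension hleaf); apply: IH => [|e2].
  by move: hn; rewrite (cardsD1 e E') he.
by rewrite !inE => /andP [_ /hE'].
Qed.

End ForestColouring.

(** * Assignments into S_c(abc) separating a word *)

Section Link.
Variable H : hypergraph.
Local Notation V := (hvert H).
Local Notation E := (hedges H).
Hypothesis H3 : uniform3 H.
Hypothesis Hlin : linear_hypergraph H.

(* By linearity the edges through [c] match up their other two vertices; colour each
   matched pair with two colours, putting [p0] and [q0] (not matched together) on the same side. *)
Lemma link_colouring (c p0 q0 : V) : [set p0; q0; c] \notin E ->
  exists2 col : V -> bool, col p0 = col q0 & forall p q, [set p; q; c] \in E -> col p != col q.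
Proof.
move=> hne; pose inS r := (r == p0) || (r == q0).
pose col p := if inS p then true else
  if [pick r | [set p; r; c] \in E] is Some r
  then (if inS r then false else enum_rank p < enum_rank r) else true.
exists col; first by rewrite /col /inS !eqxx ?orbT.
have partner p q : [set p; q; c] \in E -> [pick r | [set p; r; c] \in E] = Some q.
  move=> he; case: pickP => [r hr|h]; last by rewrite h in he.
  by congr Some; rewrite set3C23 in hr; rewrite set3C23 in he; apply: (edge3_uniq H3 Hlin hr he).
have notboth p q : [set p; q; c] \in E -> inS p -> ~~ inS q.
  move=> he hp; apply/negP => hq; have [npq _ _] := edge3_neq H3 he.
  move: hp hq; rewrite /inS => /orP [] /eqP ep /orP [] /eqP eq; subst.
  - by rewrite eqxx in npq.
  - by rewrite he in hne.
  - by rewrite set3C12 he in hne.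
  - by rewrite eqxx in npq.
have col_inS p q : [set p; q; c] \in E -> inS p -> col p != col q.
  move=> he hp; have nq := notboth _ _ he hp.
  have he' : [set q; p; c] \in E by rewrite set3C12.
  by rewrite /col hp (negbTE nq) (partner _ _ he') hp.
move=> p q he; have he' : [set q; p; c] \in E by rewrite set3C12.
case hp: (inS p); first exact: col_inS.
case hq: (inS q); first by rewrite eq_sym; exact: col_inS.
rewrite /col hp hq (partner _ _ he) (partner _ _ he') hp hq.
have [npq _ _] := edge3_neq H3 he.
have : enum_rank p != enum_rank q by apply: contra npq => /eqP /enum_rank_inj ->.
by case: ltngtP => // /val_inj ->; rewrite eqxx.
Qed.

End Link.

Section LargeGirth.
Variable H : hypergraph.
Local Notation V := (hvert H).
Local Notation E := (hedges H).
Variable K : nat.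
Hypothesis Hg : girth_gt H K.
Hypothesis H3 : uniform3 H.
Hypothesis HK : 3 <= K.

(* Three pairwise edge-sharing vertices that do not span an edge would form a 3-cycle. *)
Lemma non_edge_uncovered_pair (p q r : V) :
  p != q -> p != r -> q != r -> [set p; q; r] \notin E ->
  [\/ forall e, e \in E -> ~~ ((p \in e) && (q \in e)),
      forall e, e \in E -> ~~ ((q \in e) && (r \in e))
    | forall e, e \in E -> ~~ ((p \in e) && (r \in e))].
Proof.
move=> npq npr nqr hne; apply: NNPP => hn.
have ex a b : ~ (forall e, e \in E -> ~~ ((a \in e) && (b \in e))) ->
    exists e, [/\ e \in E, a \in e & b \in e].
  move=> h; apply: NNPP => h'; apply: h => e he; apply/andP => -[ha hb]; apply: h'; by exists e.
have [e1 [h1 p1 q1]] := ex p q (fun h => hn (Or31 _ _ h)).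
have [e2 [h2 q2 r2]] := ex q r (fun h => hn (Or32 _ _ h)).
have [e3 [h3 p3 r3]] := ex p r (fun h => hn (Or33 _ _ h)).
have bad e : e \in E -> p \in e -> q \in e -> r \in e -> False.
  by move=> he hp hq hr; move: hne; rewrite -(card3_set3 (H3 he)) // he.
case: (eqVneq e1 e2) => [e12|n12]; first by subst; apply: (bad e2).
case: (eqVneq e2 e3) => [e23|n23]; first by subst; apply: (bad e3).
case: (eqVneq e1 e3) => [e13|n13]; first by subst; apply: (bad e3).
apply: (Hg HK); split => //.
exists (fun i => nth p [:: p; q; r] i), (fun i => nth e1 [:: e1; e2; e3] i); split.
- move=> [|[|[|i]]] [|[|[|j]]] //= _ _ /eqP;
    by rewrite ?(negbTE npq) ?(negbTE npr) ?(negbTE nqr) // eq_sym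
      ?(negbTE npq) ?(negbTE npr) ?(negbTE nqr).
- move=> [|[|[|i]]] [|[|[|j]]] //= _ _ /eqP;
    by rewrite ?(negbTE n12) ?(negbTE n13) ?(negbTE n23) // eq_sym
      ?(negbTE n12) ?(negbTE n13) ?(negbTE n23).
- by move=> [|[|[|i]]].
- by move=> [|[|[|i]]].
- by split => // [[|[|[|i]]]].
Qed.

End LargeGirth.

(* A hyperedge product [a_p a_q a_r] is sent to [abc] iff [p], [q], [r] get distinct colours. *)
Definition colour_map (V : Type) (col : V -> colour) (a : sh_elt V) : Sc :=
  match a with
  | SA => abc | SAv p => letter (col p) | SCv p => coletter (col p) | SInf => Sc_inf
  end.

Section ColourMap.
Variables (V : Type) (col : V -> colour).
Local Notation g := (colour_map col).

Lemma colour_map_abc a : g a = abc -> a = SA.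
Proof. by case: a => [| |p|p] //=; case: (col p). Qed.

Lemma colour_map_mul2_abc a b : Sc_mul (g a) (g b) = abc -> exists p q,
  (a = SAv p /\ b = SCv q \/ a = SCv q /\ b = SAv p) /\ col p = col q.
Proof.
case: a => [| |p|p]; case: b => [| |q|q] //=;
  try (case cp: (col p)); try (case cq: (col q)); try done.
all: first [by exists p, q; rewrite cp cq; split; [left|]
  | by exists q, p; rewrite cp cq; split; [right|]].
Qed.

Lemma colour_map_mul3_abc a b c : Sc_mul (Sc_mul (g a) (g b)) (g c) = abc -> exists p q r,
  [/\ a = SAv p, b = SAv q, c = SAv r & [/\ col p <> col q, col p <> col r & col q <> col r]].
Proof.
case: a => [| |p|p]; case: b => [| |q|q]; case: c => [| |r|r] //=;
  try (case cp: (col p)); try (case cq: (col q)); try (case cr: (col r)); try done.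
all: by exists p, q, r; rewrite cp cq cr.
Qed.

End ColourMap.

Section Separation.
Variable H : hypergraph.
Local Notation V := (hvert H).
Local Notation E := (hedges H).
Local Notation shm := (@sh_mul H).
Local Notation shw := (evalw SInf shm).
Local Notation scw := (evalw Sc_inf Sc_mul).
Hypothesis H3 : uniform3 H.
Hypothesis Hlin : linear_hypergraph H.
Variables (X : eqType) (U : seq X) (s : X -> sh_elt V) (wu : seq (seq X)) (w0 : seq X).
Hypothesis Hwu : forall w, w \in wu -> w != [::] /\ {subset w <= U}.

Definition separating := exists (s' : X -> Sc) (Y : Sc),
  [/\ Y != Sc_inf, forall w, w \in wu -> scw s' w = Y & scw s' w0 != Y].

(* [g] need only be multiplicative on the products of length at most 3 that evaluate to [a];
   variables outside [U] are sent to [Sc_inf]. *)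
Lemma separating_by (g : sh_elt V -> Sc) (a : sh_elt V) (Y : Sc) :
  a != SInf -> Y != Sc_inf -> (forall w, w \in wu -> shw s w = a) -> g a = Y ->
  (forall x y, x \in U -> y \in U -> shm (s x) (s y) = a -> Sc_mul (g (s x)) (g (s y)) = Y) ->
  (forall x y z, x \in U -> y \in U -> z \in U -> shm (shm (s x) (s y)) (s z) = a ->
     Sc_mul (Sc_mul (g (s x)) (g (s y))) (g (s z)) = Y) ->
  ({subset w0 <= U} -> scw (g \o s) w0 != Y) -> separating.
Proof.
move=> na nY hwu h1 h2 h3 hw0.
pose s' x := if x \in U then g (s x) else Sc_inf.
have es' w : {subset w <= U} -> scw s' w = scw (g \o s) w.
  by move=> sub; apply: eq_in_evalw => x /sub; rewrite /s' => ->.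
exists s', Y; split => //.
  move=> w hw; have [nw sub] := Hwu hw; rewrite es' //; have := hwu w hw.
  case: (ltnP 3 (size w)) => [long|short].
    by rewrite SH_evalw_size_gt3 // => e; rewrite -e eqxx in na.
  have inU x : x \in w -> x \in U by apply: sub.
  case: w nw short inU {hw sub} => [|x [|y [|z [|t r]]]] //= _ _ inU.
  - by move=> ->.
  - by apply: h2; apply: inU; rewrite !inE eqxx ?orbT.
  - by apply: h3; apply: inU; rewrite !inE eqxx ?orbT.
case: (boolP (all (mem U) w0)) => [/allP sub|/allPn [x hx nx]].
  by rewrite es' //; apply: hw0.
rewrite (evalw_inf Sc_mul0l Sc_mul0r hx) 1?eq_sym //.
by rewrite /s' ifN.
Qed.

Lemma separating_SAv v : (forall w, w \in wu -> shw s w = SAv v) -> shw s w0 != SAv v ->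
  separating.
Proof.
move=> hwu hw0; pose g b := if b == SAv v then letter Ca else Sc_inf.
apply: (separating_by (g := g) (Y := letter Ca) _ _ hwu) => //.
- by rewrite /g eqxx.
- by move=> x y _ _ /eqP; rewrite (negbTE (sh_mul2_neq_SAv _ _ _)).
- by move=> x y z _ _ _; case: (sh_mul3 (s x) (s y) (s z)) => ->.
move=> _; case: (ltnP 3 (size w0)) => [long|]; first by rewrite Sc_evalw_size_gt3.
case: w0 hw0 => [|x [|y [|z [|t r]]]] //= hw0 _; rewrite /g.
- by case: ifP => // /eqP e; rewrite e eqxx in hw0.
- by case: ifP => _; case: ifP.
- by case: (Sc_mul3 (g (s x)) (g (s y)) (g (s z))) => ->.
Qed.

Lemma separating_SCv c : (forall w, w \in wu -> shw s w = SCv c) -> shw s w0 != SCv c ->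
  separating.
Proof.
move=> hwu hw0.
have [p0 [q0 [hne hpq]]] : exists p0 q0, [set p0; q0; c] \notin E /\
    forall x y p q, w0 = [:: x; y] -> s x = SAv p -> s y = SAv q -> p = p0 /\ q = q0.
  case: (classic (exists x y p q, [/\ w0 = [:: x; y], s x = SAv p & s y = SAv q])).
    move=> [x [y [p [q [e hx hy]]]]]; exists p, q; split.
      by apply: contra hw0 => he; rewrite e /= hx hy (sh_mulAv_edge H3 Hlin he).
    by move=> x' y' p' q'; rewrite e => -[<- <-]; rewrite hx hy => -[<-] [<-].
  move=> nex; exists c, c; split; first by apply/negP => /(edge3_neq H3) []; rewrite eqxx.
  by move=> x y p q e hx hy; case: nex; exists x, y, p, q.
have [col hcol0 hcol] := link_colouring H3 Hlin hne.
pose g b := match b with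
  | SCv c' => if c' == c then coletter Cc else Sc_inf
  | SAv p => letter (if col p then Ca else Cb)
  | _ => Sc_inf end.
have g2 a b : Sc_mul (g a) (g b) = coletter Cc ->
    exists p q, [/\ a = SAv p, b = SAv q & col p != col q].
  case: a => [| |p|p]; case: b => [| |q|q] //=; try by case: (col q).
  all: try by case: ifP.
  - by case cp: (col p); case cq: (col q) => //= _; exists p, q; rewrite cp cq.
  - by case: (col p); case: ifP.
  - by case: (col q); case: ifP.
  - by case: ifP; case: ifP.
apply: (separating_by (g := g) (Y := coletter Cc) _ _ hwu) => //.
- by rewrite /g eqxx.
- move=> x y _ _ /sh_mul2_SCv [p [q [-> -> he]]] /=.
  by move: (hcol p q he); case: (col p); case: (col q).
- by move=> x y z _ _ _; case: (sh_mul3 (s x) (s y) (s z)) => ->.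
move=> _; case: (ltnP 3 (size w0)) => [long|]; first by rewrite Sc_evalw_size_gt3.
case: w0 hw0 hpq => [|x [|y [|z [|t r]]]] //= hw0 hpq _.
- rewrite /g; case: (s x) hw0 => [| |p|p] //= hp; first by case: (col p).
  by case: ifP => // /eqP ep; rewrite ep eqxx in hp.
- apply/eqP => /g2 [p [q [hx hy]]]; have [-> ->] := hpq x y p q erefl hx hy.
  by rewrite hcol0 eqxx.
- by case: (Sc_mul3 (g (s x)) (g (s y)) (g (s z))) => ->.
Qed.

Variable K : nat.
Hypothesis Hg : girth_gt H K.
Hypothesis HK : 3 <= K.

Lemma rainbow_breaking (E' : {set {set V}}) : flexible E' -> {subset E' <= E} -> shw s w0 != SA ->
  exists2 col, rainbow col E' & scw (colour_map col \o s) w0 != abc.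
Proof.
move=> [[col0 hr0] Qneq Qeq] sE' hw0.
case: (ltnP 3 (size w0)) => [long|]; first by exists col0; rewrite // Sc_evalw_size_gt3.
case: w0 hw0 => [|x [|y [|z [|t r]]]] //= hw0 _; try by exists col0.
- by exists col0 => //; apply/eqP => /colour_map_abc e; rewrite e eqxx in hw0.
- have [[p [q hpq]]|nex] := classic (exists p q,
      s x = SAv p /\ s y = SCv q \/ s x = SCv q /\ s y = SAv p); last first.
    exists col0 => //; apply/eqP => /colour_map_mul2_abc [p [q [hpq _]]].
    by apply: nex; exists p, q.
  have npq : p != q.
    by apply: contraNneq hw0 => epq; case: hpq => -[-> ->]; rewrite epq /= eqxx.
  have [col hr hc] := Qneq p q npq; exists col => //.
  apply/eqP => /colour_map_mul2_abc [p' [q' [hpq' e]]]; apply: hc.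
  by case: hpq => -[hx hy]; case: hpq' => -[hx' hy']; congruence.
- have [[p [q [r [hx hy hz]]]]|nex] :=
    classic (exists p q r, [/\ s x = SAv p, s y = SAv q & s z = SAv r]); last first.
    exists col0 => //; apply/eqP => /colour_map_mul3_abc [p [q [r [hx hy hz _]]]].
    by apply: nex; exists p, q, r.
  have hne : [set p; q; r] \notin E.
    by apply: contra hw0 => he; rewrite hx hy hz (sh_mulAv3 H3 Hlin) he.
  suff [col hr hc] :
      exists2 col, rainbow col E' & ~ [/\ col p <> col q, col p <> col r & col q <> col r].
    exists col => //; apply/eqP => /colour_map_mul3_abc [p' [q' [r' []]]].
    by rewrite hx hy hz => -[<-] [<-] [<-].
  case: (eqVneq p q) => [<-|npq]; first by exists col0 => // -[].
  case: (eqVneq p r) => [<-|npr]; first by exists col0 => // -[].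
  case: (eqVneq q r) => [<-|nqr]; first by exists col0 => // -[].
  have sub a b : (forall e, e \in E -> ~~ ((a \in e) && (b \in e))) ->
      forall e, e \in E' -> ~~ ((a \in e) && (b \in e)).
    by move=> h e /sE'; apply: h.
  case: (non_edge_uncovered_pair Hg H3 HK npq npr nqr hne) => /sub h.
  - by have [col hr hc] := Qeq p q npq h; exists col => // -[].
  - by have [col hr hc] := Qeq q r nqr h; exists col => // -[].
  - by have [col hr hc] := Qeq p r npr h; exists col => // -[].
Qed.

Lemma separating_SA : size U <= K -> (forall w, w \in wu -> shw s w = SA) -> shw s w0 != SA ->
  separating.
Proof.
move=> hUK hwu hw0.
pose P := [set p in pmap (fun x => if s x is SAv p then Some p else None) U].
have hP : #|P| <= K.
  rewrite cardsE; apply: leq_trans (card_size _) _; rewrite size_pmap.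
  exact: leq_trans (count_size _ _) hUK.
have inP x p : x \in U -> s x = SAv p -> p \in P.
  by move=> hx hs; rewrite inE mem_pmap; apply/mapP; exists x => //; rewrite hs.
pose E' := [set e in E | e \subset P].
have hE' e : e \in E' -> e \in E /\ e \subset P by rewrite inE => /andP.
have [col hrb hbreak] :=
  rainbow_breaking (flexible_forest Hg H3 hP hE') (fun e he => (hE' e he).1) hw0.
apply: (separating_by (g := colour_map col) (Y := abc) _ _ hwu) => //.
- move=> x y _ _ /sh_mul2_SA [p [[-> ->]|[-> ->]]] /=; first exact: mul_letter_coletter.
  by rewrite Sc_mulC mul_letter_coletter.
move=> x y z hx hy hz /(sh_mul3_SA H3 Hlin) [p [q [r [ex ey ez he]]]].
rewrite ex ey ez /=; have [npq npr nqr] := edge3_neq H3 he.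
have heE : [set p; q; r] \in E'.
  rewrite inE he; apply/subsetP => v; rewrite in_set3.
  by case/or3P => /eqP ->; [exact: inP hx ex | exact: inP hy ey | exact: inP hz ez].
have hin : [/\ p \in [set p; q; r], q \in [set p; q; r] & r \in [set p; q; r]].
  by rewrite !in_set3 !eqxx ?orbT.
have [hp hq hr] := hin.
by apply: mul_letters_rainbow; apply: (hrb _ heE).
Qed.

End Separation.

(** * Short identities and the main theorem *)

Section ShortIdentities.
Variable H : hypergraph.
Local Notation V := (hvert H).
Local Notation sha := (@sh_add H).
Local Notation shm := (@sh_mul H).
Variable K : nat.
Hypothesis Hg : girth_gt H K.
Hypothesis H3 : uniform3 H.
Hypothesis HK : 3 <= K.

(* A word [w0] of [v] taking another value than [u] would be separated from the words of [u]
   by an assignment into [S_c(abc)], contradicting [u ~ v] there. *)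
Lemma SH_eval_eq_of_Sc (X : eqType) (u v : term X) (s : X -> sh_elt V) :
  size (occ u) <= K -> alg_sat Sc_add Sc_mul u v -> eval sha shm s u != SInf ->
  eval sha shm s v = eval sha shm s u.
Proof.
move=> hu hsat na; set a := eval sha shm s u in na *.
have Hlin := girth_gt_linear (leq_trans (isT : 2 <= 3) HK) Hg.
have hwu := (SH_eval_wordsP H3 Hlin s u na).1 erefl.
apply/(SH_eval_wordsP H3 Hlin s v na) => w0 hw0; apply/eqP/negP => /negP nw0.
have hwords w : w \in words u -> w != [::] /\ {subset w <= occ u}.
  by move=> hw; split; [apply: mem_words_neq0 hw | apply: mem_words_occ].
have [s' [Y [nY h1 h2]]] : separating (words u) w0.
  move: hwu nw0 na; case: a => [| |p|c] hwu nw0 // _.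
  - exact: (separating_SA H3 Hlin hwords Hg HK hu hwu nw0).
  - exact: (separating_SAv hwords hwu nw0).
  - exact: (separating_SCv H3 Hlin hwords hwu nw0).
have eu : eval Sc_add Sc_mul s' u = Y by apply/(Sc_eval_wordsP s' u nY).
by move: h2; rewrite ((Sc_eval_wordsP s' v nY).1 _ w0 hw0) ?eqxx // -hsat.
Qed.

Lemma alg_sat_SH_of_Sc (X : eqType) (u v : term X) :
  size (occ u) <= K -> size (occ v) <= K -> alg_sat Sc_add Sc_mul u v -> alg_sat sha shm u v.
Proof.
move=> hu hv hsat s.
case: (eqVneq (eval sha shm s u) SInf) => [eu|nu]; last by rewrite (SH_eval_eq_of_Sc hu hsat nu).
case: (eqVneq (eval sha shm s v) SInf) => [ev|nv]; first by rewrite eu ev.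
by rewrite (SH_eval_eq_of_Sc hv (fun s' => esym (hsat s')) nv).
Qed.

End ShortIdentities.

Lemma term_sum_eval (X : Type) (A : eqType) (add mul : A -> A -> A) (s : X -> A)
    (l : seq (term X)) a :
  (forall x, add x x = x) -> 0 < size l -> all (pred1 a) [seq eval add mul s t | t <- l] ->
  exists2 t, term_sum l = Some t & eval add mul s t = a.
Proof.
move=> addI; case: l => //= t0 l _ /andP [/eqP h0 hl]; exists (foldl Add t0 l) => //.
elim: l t0 h0 hl => //= t1 l IH t0 h0 /andP [/eqP h1 hl].
by apply: IH => //=; rewrite h0 h1 addI.
Qed.

Lemma tH_value (H : hypergraph) : uniform3 H -> linear_hypergraph H -> hedges H != set0 ->
  exists2 t, tH H = Some t & eval (@sh_add H) (@sh_mul H) (fun v => SAv v) t = SA.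
Proof.
move=> H3 Hlin /set0Pn [e he].
have /card_gt1P [x [y [hx hy nxy]]] : 1 < #|e| by rewrite H3.
have [z [_ _ _ ez]] := card3_third (H3 _ he) hx hy nxy.
apply: term_sum_eval.
- by move=> a; rewrite /sh_add -[sh_eqb a a]/(a == a) eqxx.
- rewrite size_map -has_predT; apply/hasP; exists ((x, y), z) => //.
  by rewrite mem_filter /= -ez he; do 2?apply: allpairs_f; rewrite mem_enum.
rewrite -map_comp; apply/allP => _ /mapP [[[a b] c] hin ->].
by move: hin; rewrite mem_filter /= => /andP [hc _]; rewrite (sh_mulAv3 H3 Hlin) hc.
Qed.

Lemma leq_sum_In (T : Type) (F : seq T) (f : T -> nat) p :
  List.In p F -> f p <= \sum_(q <- F) f q.
Proof.
elim: F => [//|q F IH] /= [->|/IH h]; rewrite big_cons; first exact: leq_addr.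
exact: leq_trans h (leq_addl _ _).
Qed.

Lemma leq_bin2_3n n : n <= 'C(3 * n, 2).
Proof.
case: n => // n; have -> : 3 * n.+1 = (3 * n).+2.+1 by lia.
by rewrite binS bin1; lia.
Qed.

Theorem theorem2p1 (H : nat -> hypergraph) (w : forall n, term (hvert (H n)))
  (Sigma : identities) :
  (forall n, 2 <= n ->
     [/\ uniform3 (H n), no_isolated (H n), ~ two_colourable (H n)
       & girth_gt (H n) (3 * 'C(3 * n, 2))]) ->
  contains_Sc Sigma ->
  (forall n, 2 <= n -> non_hyperedge_term (w n)) ->
  (forall n, 2 <= n -> sat_tH Sigma (w n)) ->
  ~ finitely_based Sigma.
Proof.
move=> hH hSc hw hsat [F hF].
pose N := \sum_(p <- F) (size (occ p.1) + size (occ p.2)).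
have [H3 _ hnc Hg] := hH N.+2 isT.
have hK := leq_bin2_3n N.+2; set K := 3 * _ in Hg.
have [HK hNK] : 3 <= K /\ N <= K by rewrite /K; lia.
have Hlin := girth_gt_linear (ltnW HK) Hg.
have hScm : models Sc_ais Sigma := hSc.
have hSH : models (SH_ais H3 Hlin) Sigma.
  apply/(hF _).2 => p hp; have := leq_sum_In (fun p => size (occ p.1) + size (occ p.2)) hp.
  rewrite -/N => hle; apply: (alg_sat_SH_of_Sc Hg H3 HK); last exact: (hF Sc_ais).1 hScm p hp.
  - by apply: leq_trans hNK; apply: leq_trans hle; apply: leq_addr.
  - by apply: leq_trans hNK; apply: leq_trans hle; apply: leq_addl.
have hne : hedges (H N.+2) != set0.
  by apply: contra_notN hnc => /eqP he; exists (fun _ => true) => e; rewrite he inE.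
have [t et ev] := tH_value H3 Hlin hne.
move: (hsat N.+2 isT) (hw N.+2 isT); rewrite /sat_tH et => /(_ _ hSH (fun v => SAv v)) /=.
by rewrite ev /sh_add /non_hyperedge_term; case: (eval _ _ _ (w _)).
Qed.
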